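(* Let $q\ge2$, $n\ge2$, $X=\{0,\ldots,q-1\}$, and let $\mathcal{L}=\{L_1,\ldots,L_k\}$ be a partition of $X^n$ with respect to which the Insect Markov chain on $X^n$ is lumpable. For each $i$ let $L_i'\subseteq X^{n-1}$ be the set of words obtained by deleting the last letter from the elements of $L_i$, and let $\mathcal{L}'=\{L_1',\ldots,L_h'\}$ be the collection of distinct sets among $L_1',\dots,L_k'$ (which is a partition of $X^{n-1}$). Then the Insect Markov chain on $X^{n-1}$ is lumpable with respect to $\mathcal{L}'$.
   Context: For $m\ge1$ and $x,y\in X^m$, $d(x,y)=m-\max\{\ell\in\{0,\ldots,m\}: x_1\cdots x_\ell=y_1\cdots y_\ell\}$. The Insect Markov chain on $X^m$: set $\alpha_j=\frac{q^j-1}{q^{j+1}-1}$ for $1\le j\le m-1$, $\alpha_m=0$; transition probabilities are $p(x,y)=q^{-1}(1-\alpha_1)+\sum_{i=2}^mq^{-i}\alpha_1\cdots\alpha_{i-1}(1-\alpha_i)$ if $d(x,y)\in\{0,1\}$, and $p(x,y)=\sum_{i=j}^mq^{-i}\alpha_1\cdots\alpha_{i-1}(1-\alpha_i)$ if $d(x,y)=j>1$. A chain is lumpable with respect to a partition if for all parts $L,L'$ the map $x\mapsto\sum_{y\in L'}p(x,y)$ is constant on $L$. *)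

From HB Require Import structures.
From mathcomp Require Import all_boot all_order all_algebra.
Set Implicit Arguments. Unset Strict Implicit. Unset Printing Implicit Defensive.
Import Order.TTheory GRing.Theory Num.Theory.

Definition word (q m : nat) := {ffun 'I_m -> 'I_q}.

Definition lcp (q m : nat) (x y : word q m) : nat :=
  \max_(l < m.+1 | [forall i : 'I_m, (i < l) ==> (x i == y i)]) (l : nat).

Definition dist (q m : nat) (x y : word q m) : nat := m - lcp x y.

Local Open Scope ring_scope.

Definition alpha (R : realFieldType) (q m j : nat) : R :=
  if (j < m)%N then ((q%:R ^+ j - 1) / (q%:R ^+ j.+1 - 1)) else 0.

Definition insect_term (R : realFieldType) (q m i : nat) : R :=
  (q%:R ^+ i)^-1 * (\prod_(1 <= k < i) alpha R q m k) * (1 - alpha R q m i).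

Definition insect_p (R : realFieldType) (q m : nat) (x y : word q m) : R :=
  let j := dist x y in
  if (j <= 1)%N then
    (q%:R)^-1 * (1 - alpha R q m 1) + \sum_(2 <= i < m.+1) insect_term R q m i
  else \sum_(j <= i < m.+1) insect_term R q m i.

Definition insect_lumpable (R : realFieldType) (q m : nat)
    (P : {set {set word q m}}) : Prop :=
  forall L L' : {set word q m}, L \in P -> L' \in P ->
  forall x y : word q m, x \in L -> y \in L ->
    \sum_(z in L') insect_p R x z = \sum_(z in L') insect_p R y z.

Definition delete_last (q n : nat) (x : word q n) : word q n.-1 :=
  [ffun i : 'I_n.-1 => x (widen_ord (leq_pred n) i)].

Definition proj_partition (q n : nat) (P : {set {set word q n}})
  : {set {set word q n.-1}} :=
  [set [set delete_last x | x in L] | L : {set word q n} in P].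

From HB Require Import structures.
From mathcomp Require Import all_boot all_order all_algebra.
From mathcomp Require Import ring lra zify.
Set Implicit Arguments. Unset Strict Implicit. Unset Printing Implicit Defensive.
Import Order.TTheory GRing.Theory Num.Theory.
Local Open Scope ring_scope.

(* The transition operator of the Insect chain on X^(m+1) is T = \sum_j a_j A_j
   with a_j > 0, where A_j averages a function over the balls of radius j;
   the ultrametric inequality gives A_i A_j = A_(max i j).  Lumpability says
   that T preserves the functions constant on the blocks, and since
   T^2 - a_1 T = \sum_(j > 1) a'_j A_j with a'_j > 0, induction on the number
   of terms shows that every A_j preserves them.  Deleting the last letter
   maps the balls of radius j+1 onto the balls of radius j, so the truncation
   of x lies in the truncation L' of a block L iff the radius-1 ball around x
   meets L, a block-constant condition on x: the truncated
   blocks therefore form a partition, and the transition probabilities of the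
   chain on X^m into L' are combinations of ball sums of a block-constant
   function. *)

Section MaxChain.
Variables (R : realFieldType) (T : Type) (U : (T -> R) -> Prop).
Hypothesis U0 : U (fun _ => 0).
Hypothesis U_add : forall f g, U f -> U g -> U (fun x => f x + g x).
Hypothesis U_scale : forall c f, U f -> U (fun x => c * f x).
Hypothesis U_ext : forall f g, f =1 g -> U f -> U g.

Definition lincomb n (c : nat -> R) (psi : nat -> T -> R) (x : T) : R :=
  \sum_(k < n) c k * psi k x.

Lemma U_lincomb n c psi : (forall k, (k < n)%N -> U (psi k)) -> U (lincomb n c psi).
Proof.
elim: n => [|n IHn] psi_U; first by apply: U_ext U0 => x; rewrite /lincomb big_ord0.
apply: (U_ext (f := fun x => lincomb n c psi x + c n * psi n x)).
  by move=> x; rewrite /lincomb big_ord_recr.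
apply: U_add; last exact: U_scale (psi_U _ _).
by apply: IHn => k /ltnW; apply: psi_U.
Qed.

Definition maxn_square (a g : nat -> R) n :=
  \sum_(i < n) a i * \sum_(j < n) a j * g (maxn i j).

Lemma maxn_squareS a g n : maxn_square a g n.+1 =
  maxn_square a g n + a n * g n * (2 * \sum_(i < n) a i + a n).
Proof.
rewrite /maxn_square big_ord_recr /=.
have -> : \sum_(i < n) a i * \sum_(j < n.+1) a j * g (maxn i j) =
   \sum_(i < n) a i * \sum_(j < n) a j * g (maxn i j) + \sum_(i < n) a i * (a n * g n).
  rewrite -big_split /=; apply: eq_bigr => i _.
  by rewrite big_ord_recr /= -mulrDr (maxn_idPr (ltnW (ltn_ord i))).
rewrite big_ord_recr /= maxnn.
have -> : \sum_(j < n) a j * g (maxn n j) = \sum_(j < n) a j * g n.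
  by apply: eq_bigr => j _; rewrite (maxn_idPl (ltnW (ltn_ord j))).
rewrite -!mulr_suml; ring.
Qed.

Definition peel_coef (a : nat -> R) k :=
  a k.+1 * (a k.+1 + 2 * \sum_(i < k.+1) a i - a 0).

(* The square of [\sum_i a_i P_i] minus [a_0] times it no longer involves [P_0]. *)
Lemma maxn_square_peel a g n :
  maxn_square a g n.+1 - a 0 * \sum_(i < n.+1) a i * g i
  = \sum_(k < n) peel_coef a k * g k.+1.
Proof.
elim: n => [|n IHn]; first by rewrite /maxn_square !big_ord1 big_ord0 maxnn subrr.
rewrite maxn_squareS [RHS]big_ord_recr /= -IHn /peel_coef.
rewrite [\sum_(i < n.+2) _]big_ord_recr /=; ring.
Qed.

Lemma peel_coef_gt0 n a k : (forall i, (i < n)%N -> 0 < a i) -> (k.+1 < n)%N ->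
  0 < peel_coef a k.
Proof.
move=> a_gt0 kn; apply: mulr_gt0; first exact: a_gt0.
have a0_gt0 := a_gt0 0%N (ltn_trans (ltn0Sn k) kn).
have : 0 <= \sum_(i < k) a i.+1.
  by apply: sumr_ge0 => i _; apply/ltW/a_gt0; have := ltn_ord i; lia.
rewrite big_ord_recl /=; have := a_gt0 _ kn; lra.
Qed.

Lemma U_peel n (P : nat -> (T -> R) -> T -> R) a :
  (forall i r c psi x, P i (lincomb r c psi) x = lincomb r c (fun k => P i (psi k)) x) ->
  (forall i j f x, (i < n.+1)%N -> (j < n.+1)%N -> P i (P j f) x = P (maxn i j) f x) ->
  (forall f, U f -> U (lincomb n.+1 a (fun i => P i f))) ->
  forall g, U g -> U (lincomb n (peel_coef a) (fun k => P k.+1 g)).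
Proof.
move=> P_lin P_maxn comb_U g g_U.
pose Ag := lincomb n.+1 a (fun i => P i g).
have Ag_U : U Ag by exact: comb_U.
have : U (fun x => lincomb n.+1 a (fun i => P i Ag) x + (- a 0) * Ag x).
  by apply: U_add; [apply: comb_U | apply: U_scale].
apply: U_ext => x.
have PAg (i : 'I_n.+1) : P i Ag x = \sum_(j < n.+1) a j * P (maxn i j) g x.
  by rewrite P_lin; apply: eq_bigr => j _; rewrite P_maxn.
rewrite /lincomb -(maxn_square_peel a (fun k => P k g x)) /maxn_square /Ag /lincomb.
under eq_bigr => i _ do rewrite PAg.
ring.
Qed.

Lemma U_max_chain n (P : nat -> (T -> R) -> T -> R) a :
  (forall i r c psi x, P i (lincomb r c psi) x = lincomb r c (fun k => P i (psi k)) x) ->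
  (forall i j f x, (i < n)%N -> (j < n)%N -> P i (P j f) x = P (maxn i j) f x) ->
  (forall i, (i < n)%N -> 0 < a i) ->
  (forall f, U f -> U (lincomb n a (fun i => P i f))) ->
  forall i f, (i < n)%N -> U f -> U (P i f).
Proof.
elim: n P a => [|n IHn] P a P_lin P_maxn a_gt0 comb_U i f //.
have PS_U k g : (k < n)%N -> U g -> U (P k.+1 g).
  apply: (IHn (fun k => P k.+1) (peel_coef a)) => //.
  - by move=> i' j' h x ? ?; rewrite P_maxn // maxnSS.
  - by move=> k' ?; apply: (peel_coef_gt0 a_gt0).
  - exact: U_peel.
case: i => [|i] ? f_U; last exact: PS_U.
(* [P_0 f] is recovered from the combination by solving for its coefficient. *)
have : U (fun x => (a 0)^-1 * (lincomb n.+1 a (fun i => P i f) x +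
                     (-1) * lincomb n (fun k => a k.+1) (fun k => P k.+1 f) x)).
  by apply/U_scale/U_add; [apply: comb_U | apply/U_scale/U_lincomb => k /PS_U; apply].
apply: U_ext => x; rewrite /lincomb big_ord_recl /=.
by field; rewrite gt_eqF ?a_gt0.
Qed.

End MaxChain.

Section Words.
Variables (q m : nat).
Implicit Types x y z : word q m.

Definition agree x z (k : nat) := [forall i : 'I_m, (i < k)%N ==> (x i == z i)].

Lemma agreeP x z k : reflect (forall i : 'I_m, (i < k)%N -> x i = z i) (agree x z k).
Proof.
apply: (iffP forallP) => H i; last by apply/implyP => /H ->.
by move=> ik; move: (H i); rewrite ik => /eqP.
Qed.

Lemma agree_sym x z k : agree x z k = agree z x k.
Proof. by apply/agreeP/agreeP => H i /H ->. Qed.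

Lemma agree_trans x y z k : agree x y k -> agree y z k -> agree x z k.
Proof. by move=> /agreeP H1 /agreeP H2; apply/agreeP => i ik; rewrite H1 // H2. Qed.

Lemma agree_leq x z k k' : (k' <= k)%N -> agree x z k -> agree x z k'.
Proof. by move=> kk /agreeP H; apply/agreeP => i ik; apply/H/(leq_trans ik kk). Qed.

Lemma leq_lcp x z k : (k <= m)%N -> (k <= lcp x z)%N = agree x z k.
Proof.
move=> km; apply/idP/idP => [|xz]; last first.
  exact: (@leq_bigmax_cond _ _ (fun l : 'I_m.+1 => val l) (Ordinal (km : k < m.+1)%N)).
have : (0 < #|[pred l : 'I_m.+1 | agree x z l]|)%N.
  by apply/card_gt0P; exists ord0; rewrite inE; apply/forallP.
move=> /(@eq_bigmax_cond _ _ (fun l : 'I_m.+1 => val l)) [l xz_l lcpE] kl.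
by apply: agree_leq xz_l; rewrite /lcp -lcpE.
Qed.

Lemma dist_leqE x z j : (dist x z <= j)%N = agree x z (m - j).
Proof. by rewrite /dist leq_subCl leq_lcp // leq_subr. Qed.

Lemma dist_leq_sym x z j : (dist x z <= j)%N = (dist z x <= j)%N.
Proof. by rewrite !dist_leqE agree_sym. Qed.

Lemma dist_ultra x y z i j : (dist x y <= i)%N -> (dist y z <= j)%N ->
  (dist x z <= maxn i j)%N.
Proof.
rewrite !dist_leqE => xy yz; apply: agree_trans.
  by apply: agree_leq xy; rewrite leq_sub2l // leq_maxl.
by apply: agree_leq yz; rewrite leq_sub2l // leq_maxr.
Qed.

Lemma dist_leq0 x z : (dist x z <= 0)%N = (x == z).
Proof.
rewrite dist_leqE subn0; apply/agreeP/eqP => [xz|-> //].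
by apply/ffunP => i; apply: xz.
Qed.

Lemma card_agree x k : (k <= m)%N -> #|[pred z | agree x z k]| = (q ^ (m - k))%N.
Proof.
move=> km.
pose F (i : 'I_m) : pred 'I_q := if (i < k)%N then pred1 (x i) else predT.
have -> : #|[pred z | agree x z k]| = #|family F|.
  apply: eq_card => z; rewrite !inE; apply/agreeP/familyP => xz i.
    by rewrite /F; case: ifP => ik //=; rewrite inE (xz i ik).
  by move=> ik; move: (xz i); rewrite /F ik inE => /eqP.
rewrite card_family foldrE big_map big_enum /=.
rewrite (eq_bigr (fun i : 'I_m => if (i < k)%N then 1%N else q)); last first.
  by move=> i _; rewrite /F; case: ifP => _; [rewrite card1 | rewrite card_ord].
rewrite -(big_mkord xpredT (fun i => if (i < k)%N then 1%N else q)).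
rewrite (big_cat_nat (leq0n k) km) /= big_nat_cond (eq_bigr (fun _ => 1%N)).
  rewrite big1_eq mul1n big_nat_cond (eq_bigr (fun _ => q)).
    by rewrite -big_nat_cond prod_nat_const_nat.
  by move=> i /andP[/andP[]]; rewrite leqNgt => /negbTE ->.
by move=> i /andP[/andP[_ ->]].
Qed.

Lemma card_ball x j : (j <= m)%N -> #|[pred z | (dist x z <= j)%N]| = (q ^ j)%N.
Proof.
move=> jm; rewrite -[in RHS](subKn jm) -(card_agree x) ?leq_subr //.
by apply: eq_card => z; rewrite !inE dist_leqE.
Qed.

End Words.

Section Balls.
Variables (R : realFieldType) (q m : nat).
Hypothesis q_gt0 : (0 < q)%N.
Implicit Types (x z : word q m) (f : word q m -> R).

Definition ball_sum j f x : R := \sum_(z | (dist x z <= j)%N) f z.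

Definition ball_avg j f x : R := (q%:R ^+ j)^-1 * ball_sum j f x.

Lemma ball_sum_const x j (c : R) : (j <= m)%N -> ball_sum j (fun=> c) x = (q ^ j)%:R * c.
Proof. by move=> jm; rewrite /ball_sum sumr_const card_ball // mulr_natl. Qed.

Lemma ball_sum_comp i j f x : (i <= m)%N -> (j <= m)%N ->
  ball_sum i (ball_sum j f) x = (q ^ minn i j)%:R * ball_sum (maxn i j) f x.
Proof.
move=> im jm; rewrite /ball_sum; case: (leqP i j) => ij.
  rewrite (eq_bigr (fun _ => ball_sum j f x)).
    exact: ball_sum_const.
  move=> z xz.
  apply: eq_bigl => w; apply/idP/idP => [zw|xw].
    by have := dist_ultra xz zw; rewrite (maxn_idPr ij).
  by rewrite dist_leq_sym in xz; have := dist_ultra xz xw; rewrite (maxn_idPr ij).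
have ji := ltnW ij.
under eq_bigr => z _ do rewrite big_mkcond.
rewrite exchange_big [in RHS]big_mkcond mulr_sumr; apply: eq_bigr => w _ /=.
rewrite -big_mkcondr; case: ifP => xw.
  rewrite -(ball_sum_const w (f w) jm); apply: eq_bigl => z.
  apply/andP/idP => [[_]|wz]; first by rewrite dist_leq_sym.
  by split; [have := dist_ultra xw wz; rewrite (maxn_idPl ji) | rewrite dist_leq_sym].
rewrite mulr0; apply: big_pred0 => z; apply/negbTE/andP => -[xz zw].
by have := dist_ultra xz zw; rewrite (maxn_idPl ji) xw.
Qed.

Lemma ball_avg_comp i j f x : (i <= m)%N -> (j <= m)%N ->
  ball_avg i (ball_avg j f) x = ball_avg (maxn i j) f x.
Proof.
move=> im jm; rewrite /ball_avg.
have -> : ball_sum i (fun z => (q%:R ^+ j)^-1 * ball_sum j f z) x =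
          (q%:R ^+ j)^-1 * ball_sum i (ball_sum j f) x by rewrite /ball_sum mulr_sumr.
have qR_neq0 : (q%:R : R) != 0 by rewrite pnatr_eq0 -lt0n.
rewrite ball_sum_comp // natrX.
by case: (leqP i j) => ij; field; rewrite ?expf_neq0.
Qed.

Lemma ball_avg_lincomb i r c psi x :
  ball_avg i (lincomb r c psi) x = lincomb r c (fun k => ball_avg i (psi k)) x.
Proof.
rewrite /ball_avg /ball_sum /lincomb exchange_big mulr_sumr; apply: eq_bigr => k _.
by rewrite -mulr_sumr mulrCA.
Qed.

End Balls.

Lemma alpha_bounds (R : realFieldType) q m k : (2 <= q)%N -> (1 <= k)%N -> (k < m)%N ->
  0 < alpha R q m k < 1.
Proof.
move=> q2 k1 km; rewrite /alpha km exprS.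
have q2R : (2 : R) <= q%:R by rewrite ler_nat.
have : (1 : R) < q%:R ^+ k by rewrite exprn_egt1; [rewrite -lt0n | lra].
set u := q%:R ^+ k => u_gt1.
have : u < q%:R * u by nra.
by rewrite divr_gt0 ?ltr_pdivrMr /=; nra.
Qed.

Lemma insect_term_gt0 (R : realFieldType) q m j : (2 <= q)%N -> (1 <= j <= m)%N ->
  0 < insect_term R q m j.
Proof.
move=> q2 /andP[j1 jm]; rewrite /insect_term.
apply: mulr_gt0; first apply: mulr_gt0.
- by rewrite invr_gt0 exprn_gt0 // ltr0n; apply: leq_trans q2.
- rewrite big_nat_cond; apply: prodr_gt0 => k /andP[/andP[k1 kj] _].
  by have /andP[] := alpha_bounds R q2 k1 (leq_trans kj jm).
have [jm'|] := ltnP j m; first by have /andP[_] := alpha_bounds R q2 j1 jm'; rewrite subr_gt0.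
by rewrite /alpha ltnNge => ->; rewrite subr0 ltr01.
Qed.

Lemma insect_pE (R : realFieldType) q m (x z : word q m) : (1 <= m)%N ->
  insect_p R x z =
  \sum_(1 <= j < m.+1) (if (dist x z <= j)%N then insect_term R q m j else 0).
Proof.
move=> m1; rewrite /insect_p /=.
have dm : (dist x z <= m)%N by apply: leq_subr.
case: ifP => d1.
  rewrite [RHS]big_ltn // d1; congr (_ + _); first by rewrite /insect_term big_geq // expr1 mulr1.
  by apply: eq_big_nat => j /andP[j2 _]; rewrite (leq_trans d1 (ltnW j2)).
rewrite [RHS](@big_cat_nat _ _ _ (dist x z)) /=; first last.
- exact: leq_trans dm _.
- by rewrite ltnW // ltnNge d1.
rewrite [X in _ = X + _]big1_seq ?add0r; first by apply: eq_big_nat => j /andP[-> _].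
by move=> j /andP[_]; rewrite mem_index_iota => /andP[_ jd]; rewrite leqNgt jd.
Qed.

Definition insect_weight (R : realFieldType) q m k : R :=
  insect_term R q m k.+1 * q%:R ^+ k.+1.

Lemma insect_transitionE (R : realFieldType) q m (f : word q m -> R) x :
  (0 < q)%N -> (1 <= m)%N ->
  \sum_z insect_p R x z * f z =
  lincomb m (insect_weight R q m) (fun k => ball_avg k.+1 f) x.
Proof.
move=> q_gt0 m1; have qR_neq0 : (q%:R : R) != 0 by rewrite pnatr_eq0 -lt0n.
under eq_bigr => z _ do rewrite insect_pE // mulr_suml.
rewrite exchange_big /= big_add1 /= big_mkord; apply: eq_bigr => k _.
rewrite /insect_weight /ball_avg /ball_sum mulrA mulfK ?expf_neq0 //.
rewrite [in RHS]big_mkcond mulr_sumr; apply: eq_bigr => z _.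
by case: ifP; rewrite ?mul0r ?mulr0.
Qed.

Section Truncation.
Variables (q m : nat).
Implicit Types (x z : word q m.+1) (w : word q m).

Lemma agree_delete_last x z k : (k <= m)%N ->
  agree (delete_last x) (delete_last z) k = agree x z k.
Proof.
move=> km; apply/agreeP/agreeP => xz i ik; last by rewrite !ffunE xz.
have im : (i < m)%N by apply: leq_trans ik km.
have := xz (Ordinal im) ik; rewrite !ffunE.
by have -> : widen_ord (leq_pred m.+1) (Ordinal im) = i by apply: val_inj.
Qed.

Lemma dist_delete_last x z j :
  (dist (delete_last x) (delete_last z) <= j)%N = (dist x z <= j.+1)%N.
Proof. by rewrite !dist_leqE subSS agree_delete_last // leq_subr. Qed.

Lemma eq_delete_last x z : (delete_last x == delete_last z) = (dist x z <= 1)%N.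
Proof. by rewrite -dist_leq0 dist_delete_last. Qed.

Definition extend w (c : 'I_q) : word q m.+1 :=
  [ffun i : 'I_m.+1 => if unlift ord_max i is Some j then w j else c].

Lemma delete_last_extend w c : delete_last (extend w c) = w.
Proof.
apply/ffunP => i; rewrite !ffunE.
case: unliftP => [j /(congr1 val)|/(congr1 val) /= im]; last first.
  by have := ltn_ord i; rewrite /= {1}im ltnn.
by rewrite /= /bump leqNgt ltn_ord add0n => /val_inj <-.
Qed.

Lemma sum_delete_last (R : realFieldType) (g : word q m -> R) : (0 < q)%N ->
  \sum_(z : word q m.+1) g (delete_last z) = q%:R * \sum_w g w.
Proof.
move=> q_gt0; pose c : 'I_q := Ordinal q_gt0.
rewrite (partition_big (fun z => delete_last z) xpredT) //= mulr_sumr.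
apply: eq_bigr => w _; rewrite -[q in q%:R]expn1 -(ball_sum_const (extend w c) (g w)) //.
apply: eq_big => z; first by rewrite -eq_delete_last delete_last_extend eq_sym.
by move=> /eqP <-.
Qed.

End Truncation.

Section Lumping.
Variables (R : realFieldType) (q m : nat) (P : {set {set word q m.+1}}).
Hypotheses (q_ge2 : (2 <= q)%N) (P_partition : partition P [set: word q m.+1]).
Hypothesis P_lumpable : insect_lumpable R P.

Implicit Types (x y z : word q m.+1) (L : {set word q m.+1}).

Let q_gt0 : (0 < q)%N. Proof. exact: ltnW q_ge2. Qed.

Definition block_constant (f : word q m.+1 -> R) :=
  forall L, L \in P -> {in L &, forall x y, f x = f y}.

Lemma block_constant_transition f : block_constant f ->
  block_constant (fun x => \sum_z insect_p R x z * f z).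
Proof.
move=> f_const L0 L0P x y x_in y_in.
have /and3P[/eqP P_cover P_triv _] := P_partition.
have sum_blocks (g : word q m.+1 -> R) : \sum_z g z = \sum_(L in P) \sum_(z in L) g z.
  by rewrite -big_trivIset // P_cover; apply: eq_bigl => z; rewrite inE.
rewrite !sum_blocks; apply: eq_bigr => L LP.
have [->|[z0 z0L]] := set_0Vmem L; first by rewrite !big_set0.
have fE w : \sum_(z in L) insect_p R w z * f z = (\sum_(z in L) insect_p R w z) * f z0.
  by rewrite mulr_suml; apply: eq_bigr => z zL; rewrite (f_const L LP z z0).
by rewrite !fE (P_lumpable L0P LP x_in y_in).
Qed.

Lemma block_constant_ball_avg k f : (k < m.+1)%N -> block_constant f ->
  block_constant (ball_avg k.+1 f).
Proof.
apply: (@U_max_chain _ _ block_constant _ _ _ _ m.+1 (fun k => ball_avg k.+1)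
                     (insect_weight R q m.+1)).
- by move=> L _ x y _ _.
- by move=> g h g_const h_const L LP x y xL yL; rewrite (g_const L LP x y) ?(h_const L LP x y).
- by move=> c g g_const L LP x y xL yL; rewrite (g_const L LP x y).
- by move=> g h gh g_const L LP x y xL yL; rewrite -!gh (g_const L LP x y).
- by move=> i; apply: ball_avg_lincomb.
- by move=> i j g x im jm; rewrite ball_avg_comp // maxnSS.
- move=> i im; apply: mulr_gt0; first exact: insect_term_gt0.
  by apply/exprn_gt0; rewrite ltr0n.
- move=> g /block_constant_transition g_const L LP x y xL yL.
  by rewrite -!insect_transitionE //; apply: (g_const L LP).
Qed.

Lemma block_constant_ball_sum j f : (1 <= j <= m.+1)%N -> block_constant f ->
  block_constant (ball_sum j f).
Proof.
case: j => // k km /(block_constant_ball_avg km) f_const L LP x y xL yL.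
have := f_const L LP x y xL yL; apply: mulfI.
by rewrite invr_neq0 // expf_neq0 // pnatr_eq0 -lt0n.
Qed.

Definition trunc_block (L : {set word q m.+1}) : {set word q m} :=
  [set delete_last x | x in L].

Lemma mem_trunc_block L x :
  (delete_last x \in trunc_block L) = (ball_sum 1 (fun z => (z \in L)%:R : R) x != 0).
Proof.
rewrite /ball_sum (eq_bigr (fun z => if z \in L then 1 else 0)); last first.
  by move=> z _; case: (z \in L).
rewrite -big_mkcondr sumr_const pnatr_eq0 -lt0n.
apply/imsetP/card_gt0P => [[z zL xz]|[z]].
  by exists z; rewrite unfold_in zL andbT -eq_delete_last xz.
by rewrite unfold_in => /andP[xz zL]; exists z => //; apply/eqP; rewrite eq_delete_last.
Qed.

Lemma block_constant_trunc_block L : L \in P ->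
  block_constant (fun z => (delete_last z \in trunc_block L)%:R : R).
Proof.
move=> LP; have /and3P[_ P_triv _] := P_partition.
have L_const : block_constant (fun z => (z \in L)%:R : R).
  move=> L' L'P x y xL' yL'; have [<-|L'L] := eqVneq L' L; first by rewrite xL' yL'.
  have L'L_dis := trivIsetP P_triv L' L L'P LP L'L.
  by rewrite (disjointFr L'L_dis xL') (disjointFr L'L_dis yL').
move=> L' L'P x y xL' yL'; rewrite !mem_trunc_block.
by rewrite (block_constant_ball_sum _ L_const L'P xL' yL').
Qed.

Lemma trunc_block_subset L1 L2 x y : L1 \in P -> L2 \in P -> x \in L1 -> y \in L2 ->
  delete_last x = delete_last y -> trunc_block L1 \subset trunc_block L2.
Proof.
move=> L1P L2P xL1 yL2 xy; apply/subsetP => _ /imsetP[z zL1 ->].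
have := block_constant_trunc_block L2P L1P zL1 xL1.
rewrite xy (imset_f _ yL2); case: (delete_last z \in trunc_block L2) => // /eqP.
by rewrite eq_sym oner_eq0.
Qed.

Lemma partition_proj_partition : partition (proj_partition P) [set: word q m].
Proof.
have /and3P[/eqP P_cover _ P_set0] := P_partition.
apply/and3P; split.
- apply/eqP/setP => w; rewrite in_setT; apply/bigcupP.
  have : extend w (Ordinal q_gt0) \in cover P by rewrite P_cover in_setT.
  case/bigcupP => L LP wL; exists (trunc_block L); first exact: imset_f.
  by rewrite -(delete_last_extend w (Ordinal q_gt0)) imset_f.
- apply/trivIsetP => _ _ /imsetP[L1 L1P ->] /imsetP[L2 L2P ->] L1L2.
  apply/pred0P => w /=; apply/negbTE/andP => -[/imsetP[x xL1 ->] /imsetP[y yL2 xy]].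
  move/negP: L1L2; apply; rewrite eqEsubset.
  by rewrite (trunc_block_subset L1P L2P xL1 yL2 xy) (trunc_block_subset L2P L1P yL2 xL1).
apply/imsetP => -[L LP /esym/eqP]; rewrite imset_eq0 => /eqP L0.
by move: LP; rewrite L0 (negbTE P_set0).
Qed.

Lemma sum_insect_trunc_block L x : (1 <= m)%N ->
  \sum_(w in trunc_block L) insect_p R (delete_last x) w =
  q%:R^-1 * lincomb m (fun k => insect_term R q m k.+1)
    (fun k => ball_sum k.+2 (fun z => (delete_last z \in trunc_block L)%:R)) x.
Proof.
move=> m_gt0; have qR_neq0 : (q%:R : R) != 0 by rewrite pnatr_eq0 -lt0n.
rewrite big_mkcond -[LHS](mulKf qR_neq0) -sum_delete_last //; congr (_ * _).
have pE z : (if delete_last z \in trunc_block L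
             then insect_p R (delete_last x) (delete_last z) else 0)
    = \sum_(k < m) insect_term R q m k.+1 *
        (if (dist x z <= k.+2)%N then (delete_last z \in trunc_block L)%:R else 0).
  rewrite insect_pE // big_add1 big_mkord.
  case: ifP => _; last by rewrite big1 // => k _; case: ifP; rewrite mulr0.
  by apply: eq_bigr => k _; rewrite dist_delete_last; case: ifP; rewrite ?mulr1 ?mulr0.
rewrite (eq_bigr _ (fun z _ => pE z)) exchange_big; apply: eq_bigr => k _.
by rewrite /ball_sum -mulr_sumr -big_mkcond.
Qed.

Lemma insect_lumpable_proj_partition : (1 <= m)%N -> insect_lumpable R (proj_partition P).
Proof.
move=> m_gt0 _ _ /imsetP[L0 L0P ->] /imsetP[L LP ->] _ _ /imsetP[x xL0 ->] /imsetP[y yL0 ->].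
rewrite !sum_insect_trunc_block //; congr (_ * _); apply: eq_bigr => k _; congr (_ * _).
have k_range : (1 <= k.+2 <= m.+1)%N by rewrite /= ltnS ltn_ord.
exact: (block_constant_ball_sum k_range (block_constant_trunc_block LP) L0P).
Qed.

End Lumping.

Theorem lemma14 (R : realFieldType) (q n : nat) (P : {set {set word q n}}) :
  (2 <= q)%N -> (2 <= n)%N ->
  partition P [set: word q n] ->
  insect_lumpable R P ->
  partition (proj_partition P) [set: word q n.-1] /\
  insect_lumpable R (proj_partition P).
Proof.
case: n P => // m P q_ge2 m_gt0 P_partition P_lumpable.
split; first exact: (partition_proj_partition q_ge2 P_partition P_lumpable).
exact: insect_lumpable_proj_partition.
Qed.
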